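(* Consider the multi-sender unicast index-coding instance with $N=4$ messages, $K=2$ senders with $\mathcal S_1=\{1,2,3\}$, $\mathcal S_2=\{2,3,4\}$, link capacities $C_1=C_2=1$, and receiver side information $\mathcal A_1=\{4\}$, $\mathcal A_2=\{1,3\}$, $\mathcal A_3=\{1,2\}$, $\mathcal A_4=\{2,3\}$. Its capacity region is $$\mathcal C=\{(R_1,R_2,R_3,R_4)\in\mathbb R_+^4: R_1\le1,\ R_4\le1,\ R_1+R_2\le2,\ R_1+R_3\le2,\ R_2+R_4\le2,\ R_3+R_4\le2\}.$$
   Context: Model. $N$ independent messages $M_1,\dots,M_N$, $M_j$ uniform on $[1:2^{nR_j}]$ ($n$ the block length). Sender $k$ knows the messages $M_i$, $i\in\mathcal S_k$, and sends an index $L_k=f_k((M_i)_{i\in\mathcal S_k})\in[1:2^{nC_k})=\{1,\dots,2^{\lfloor nC_k\rfloor}\}$ over a noiseless broadcast link reaching all receivers. Receiver $j$ knows $M_i$, $i\in\mathcal A_j$, and must output an estimate $\hat M_j=g_j(L_1,\dots,L_K,(M_i)_{i\in\mathcal A_j})$ of $M_j$. A rate tuple is achievable if there exist such codes with $\Pr[(\hat M_1,\dots,\hat M_N)\ne(M_1,\dots,M_N)]\to0$ as $n\to\infty$; the capacity region $\mathcal C$ is the closure of the set of achievable rate tuples. *)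

From Stdlib Require Import Reals Lra Lia ZArith Arith List.
Import ListNotations.
Open Scope R_scope.

(* Indices are 0-based: message j (paper) is index j-1 here. *)

Definition ceilZ (x : R) : Z := (- Int_part (- x))%Z.
Definition floorZ (x : R) : Z := Int_part x.

(* |[1:2^{nR}]| = 2^{ceil(nR)} ;  |[1:2^{nC})| = 2^{floor(nC)} *)
Definition msg_size (n : nat) (r : R) : nat := (2 ^ Z.to_nat (ceilZ (INR n * r)))%nat.
Definition link_size (n : nat) (c : R) : nat := (2 ^ Z.to_nat (floorZ (INR n * c)))%nat.

(* all tuples (m_0,...,m_{N-1}) with m_j < s_j (message m_j stands for m_j+1) *)
Fixpoint tuples (s : list nat) : list (list nat) :=
  match s with
  | [] => [[]]
  | a :: s' => flat_map (fun x => map (cons x) (tuples s')) (seq 0 a)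
  end.

Definition restrict (I : list nat) (m : list nat) : list nat :=
  map (fun i => nth i m 0%nat) I.

Record ICInstance := {
  ic_N : nat;
  ic_K : nat;
  ic_S : list (list nat);
  ic_C : list R;
  ic_A : list (list nat)
}.

Definition msg_sizes (n : nat) (Rs : list R) : list nat := map (msg_size n) Rs.

(* Encoder k (block length n) sees only (m_i)_{i in S_k};
   decoder j sees all indices L_1..L_K and (m_i)_{i in A_j}. *)
Definition Encoders := nat -> nat -> list nat -> nat.
Definition Decoders := nat -> nat -> list nat -> list nat -> nat.

Definition sent (P : ICInstance) (enc : Encoders) (n : nat) (m : list nat) : list nat :=
  map (fun k => enc n k (restrict (nth k (ic_S P) []) m)) (seq 0 (ic_K P)).

Definition encoders_valid (P : ICInstance) (Rs : list R) (enc : Encoders) (n : nat) : Prop :=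
  forall k m, (k < ic_K P)%nat -> In m (tuples (msg_sizes n Rs)) ->
    Nat.lt (enc n k (restrict (nth k (ic_S P) []) m)) (link_size n (nth k (ic_C P) 0%R)).

Definition decoding_error (P : ICInstance) (enc : Encoders) (dec : Decoders) (n : nat)
  (m : list nat) : bool :=
  existsb (fun j => negb (Nat.eqb (dec n j (sent P enc n m) (restrict (nth j (ic_A P) []) m))
                                  (nth j m 0%nat)))
          (seq 0 (ic_N P)).

(* Pr[(hat M) <> M] under uniform independent messages *)
Definition error_prob (P : ICInstance) (Rs : list R) (enc : Encoders) (dec : Decoders)
  (n : nat) : R :=
  INR (length (filter (decoding_error P enc dec n) (tuples (msg_sizes n Rs))))
  / INR (length (tuples (msg_sizes n Rs))).

Definition achievable (P : ICInstance) (Rs : list R) : Prop :=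
  length Rs = ic_N P /\ (forall r, In r Rs -> 0 <= r) /\
  exists (enc : Encoders) (dec : Decoders),
    (forall n, encoders_valid P Rs enc n) /\
    Un_cv (error_prob P Rs enc dec) 0.

Definition in_capacity_region (P : ICInstance) (Rs : list R) : Prop :=
  length Rs = ic_N P /\
  forall eps, 0 < eps -> exists Rs', achievable P Rs' /\
    forall j, (j < ic_N P)%nat -> Rabs (nth j Rs 0 - nth j Rs' 0) < eps.

Definition instance3 : ICInstance := {|
  ic_N := 4; ic_K := 2;
  ic_S := [[0;1;2]; [1;2;3]]%nat;
  ic_C := [1; 1];
  ic_A := [[3]; [0;2]; [0;1]; [1;2]]%nat
|}.

(* Converse: for each of the six inequalities there is a set J of links and a
   set I of messages such that, on correctly decoded tuples, (L_J, m_I)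
   determines the whole tuple.  For R1 + R2 <= 2, say, take both links and
   (m3, m4): receiver 1 recovers m1 from m4, then receiver 2 recovers m2 from
   m1 and m3.  Hence at most |L_J| |m_I| tuples are decoded correctly, which is
   at most half of all tuples once the inequality is violated by a margin, so
   the error probability stays above 1/2.

   Achievability: with e = 2^T, T the larger of the bit lengths of m1 and m4,
   and g = 2^(n-T), write w = m2 + m3 (mod e g^2) in base (e, g, g) as
   (p, q1, q2).  Sender 1 sends (m1 + p mod e, q1) and sender 2 sends
   (m4 + p mod e, q2), each in n bits.  Receiver 1 strips p using m4, receivers
   2 and 3 rebuild w from m1 and subtract their side information, receiver 4
   computes p from m2, m3. *)
From Stdlib Require Import Reals Lra Lia ZArith Arith List.
Import ListNotations.
Open Scope R_scope.

Lemma In_tuples_Forall2 (s m : list nat) : In m (tuples s) <-> Forall2 lt m s.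
Proof.
  revert m; induction s as [|x s IH]; intro m; simpl.
  - split; [intros [<- | []]; constructor | intro H; inversion H; auto].
  - rewrite in_flat_map; split.
    + intros [y [Hy Hm]]; apply in_map_iff in Hm as [t [<- Ht]].
      apply in_seq in Hy; constructor; [lia | now apply IH].
    + intro H; inversion H as [|y x' t s' Hy Ht]; subst.
      exists y; split; [apply in_seq; lia | apply in_map, IH, Ht].
Qed.

Lemma length_tuples (s : list nat) : length (tuples s) = fold_right Nat.mul 1%nat s.
Proof.
  induction s as [|x s IH]; simpl; [reflexivity|].
  rewrite (flat_map_constant_length (c := length (tuples s))).
  - now rewrite length_seq, IH.
  - intros; apply length_map.
Qed.

Lemma NoDup_tuples (s : list nat) : NoDup (tuples s).
Proof.
  induction s as [|x s IH]; simpl; [repeat constructor; intros []|].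
  induction (seq_NoDup x 0) as [|y l Hy Hl IHl]; simpl; [constructor|].
  apply NoDup_app; auto.
  - apply NoDup_map_NoDup_ForallPairs; auto.
    intros t t' _ _ E; now injection E.
  - intros m Hm Hm'; apply in_map_iff in Hm as [t [<- _]].
    apply in_flat_map in Hm' as [y' [Hy' Hm']]; apply in_map_iff in Hm' as [t' [E _]].
    injection E; intros _ ->; contradiction.
Qed.

Lemma Forall2_nth_rel {A B} (P : A -> B -> Prop) l l' i d d' :
  Forall2 P l l' -> (i < length l')%nat -> P (nth i l d) (nth i l' d').
Proof.
  intro H; revert i; induction H as [|x x' l l' Hx _ IH]; intros [|i] Hi;
    simpl in *; try lia; auto.
  apply IH; lia.
Qed.

Lemma In_tuples_restrict (I s m : list nat) :
  Forall (fun i => i < length s)%nat I -> In m (tuples s) ->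
  In (restrict I m) (tuples (restrict I s)).
Proof.
  rewrite !In_tuples_Forall2; intros HI Hm.
  induction HI as [|i I Hi _ IH]; simpl; constructor; auto.
  now apply Forall2_nth_rel.
Qed.

Lemma msg_sizes_length n Rs : length (msg_sizes n Rs) = length Rs.
Proof. apply length_map. Qed.

Lemma msg_size_pos n r : (0 < msg_size n r)%nat.
Proof. apply Nat.neq_0_lt_0, Nat.pow_nonzero; lia. Qed.

Lemma length_tuples_msg_sizes_pos n Rs : (0 < length (tuples (msg_sizes n Rs)))%nat.
Proof.
  rewrite length_tuples; induction Rs as [|r Rs IH]; simpl; [lia|].
  pose proof (msg_size_pos n r); nia.
Qed.

(** * Counting argument for the converse *)

Lemma length_filter_le_of_inj_on {A B} (f : A -> bool) (key : A -> B) l T :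
  NoDup l ->
  (forall x y, In x l -> In y l -> f x = true -> f y = true -> key x = key y -> x = y) ->
  (forall x, In x l -> f x = true -> In (key x) T) ->
  (length (filter f l) <= length T)%nat.
Proof.
  intros Hl Hinj HT; rewrite <- (length_map key).
  apply NoDup_incl_length.
  - apply NoDup_map_NoDup_ForallPairs; [|now apply NoDup_filter].
    intros x y Hx Hy; apply filter_In in Hx, Hy; apply Hinj; tauto.
  - intros k Hk; apply in_map_iff in Hk as [x [<- Hx]]; apply filter_In in Hx.
    apply HT; tauto.
Qed.

Lemma error_prob_ge_half P Rs enc dec n :
  let l := tuples (msg_sizes n Rs) in
  (2 * length (filter (fun m => negb (decoding_error P enc dec n m)) l) <= length l)%nat ->
  1/2 <= error_prob P Rs enc dec n.
Proof.
  intros l Hgood; unfold error_prob; fold l.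
  pose proof (filter_length (decoding_error P enc dec n) l) as Hsplit.
  pose proof (length_tuples_msg_sizes_pos n Rs) as Hpos; fold l in Hpos.
  assert (Hbad : (length l <= 2 * length (filter (decoding_error P enc dec n) l))%nat) by lia.
  apply le_INR in Hbad; apply lt_INR in Hpos; rewrite mult_INR in Hbad; simpl in *.
  apply Rmult_le_reg_r with (INR (length l)); [lra|].
  field_simplify; lra.
Qed.

Lemma error_prob_ge_half_of_cut P Rs enc dec n (caps J I : list nat) :
  (forall m, In m (tuples (msg_sizes n Rs)) -> In (sent P enc n m) (tuples caps)) ->
  Forall (fun j => j < length caps)%nat J ->
  Forall (fun i => i < length Rs)%nat I ->
  (forall m m', In m (tuples (msg_sizes n Rs)) -> In m' (tuples (msg_sizes n Rs)) ->
     decoding_error P enc dec n m = false -> decoding_error P enc dec n m' = false ->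
     restrict J (sent P enc n m) = restrict J (sent P enc n m') ->
     restrict I m = restrict I m' -> m = m') ->
  (2 * (fold_right Nat.mul 1 (restrict J caps)
        * fold_right Nat.mul 1 (restrict I (msg_sizes n Rs)))
     <= fold_right Nat.mul 1 (msg_sizes n Rs))%nat ->
  1/2 <= error_prob P Rs enc dec n.
Proof.
  intros Hsent HJ HI Hcut Hsize; apply error_prob_ge_half.
  rewrite length_tuples.
  enough (length (filter (fun m => negb (decoding_error P enc dec n m)) (tuples (msg_sizes n Rs)))
          <= length (list_prod (tuples (restrict J caps)) (tuples (restrict I (msg_sizes n Rs)))))%nat
    by (rewrite length_prod, !length_tuples in *; lia).
  apply length_filter_le_of_inj_on with
    (key := fun m => (restrict J (sent P enc n m), restrict I m)); [apply NoDup_tuples| |].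
  - intros m m' Hm Hm' Hg Hg' E; injection E.
    apply Bool.negb_true_iff in Hg, Hg'; auto.
  - intros m Hm _; apply in_prod_iff; split.
    + now apply In_tuples_restrict, Hsent.
    + apply In_tuples_restrict; [now rewrite msg_sizes_length | exact Hm].
Qed.

Lemma not_Un_cv_0_of_ge_half (u : nat -> R) :
  (exists N, forall n, (N <= n)%nat -> 1/2 <= u n) -> ~ Un_cv u 0.
Proof.
  intros [N H] Hcv; destruct (Hcv (1/2)) as [N' H']; [lra|].
  specialize (H (max N N') ltac:(lia)); specialize (H' (max N N') ltac:(lia)).
  unfold R_dist in H'; rewrite Rminus_0_r in H'; apply Rabs_def2 in H'; lra.
Qed.

Lemma link_size_1 n : link_size n 1 = (2 ^ n)%nat.
Proof. unfold link_size, floorZ; now rewrite Rmult_1_r, Int_part_INR, Nat2Z.id. Qed.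

Lemma decoding_error3_false enc dec n a b c d :
  decoding_error instance3 enc dec n [a; b; c; d] = false ->
  let L := [enc n 0%nat [a; b; c]; enc n 1%nat [b; c; d]] in
  dec n 0%nat L [d] = a /\ dec n 1%nat L [a; c] = b /\
  dec n 2%nat L [a; b] = c /\ dec n 3%nat L [b; c] = d.
Proof.
  unfold decoding_error; intro Herr; cbn in Herr; cbv zeta.
  repeat apply Bool.orb_false_iff in Herr as [?%Bool.negb_false_iff%Nat.eqb_eq Herr].
  tauto.
Qed.

Lemma sent3_in_tuples Rs enc n m :
  encoders_valid instance3 Rs enc n -> In m (tuples (msg_sizes n Rs)) ->
  In (sent instance3 enc n m) (tuples [2 ^ n; 2 ^ n]%nat).
Proof.
  intros Hval Hm; apply In_tuples_Forall2.
  pose proof (Hval 0%nat m ltac:(cbn; lia) Hm) as H0.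
  pose proof (Hval 1%nat m ltac:(cbn; lia) Hm) as H1.
  cbn in H0, H1 |- *; rewrite link_size_1 in H0, H1; repeat constructor; assumption.
Qed.

Definition cut3 (J I : list nat) : Prop :=
  forall enc dec n a b c d a' b' c' d',
    decoding_error instance3 enc dec n [a; b; c; d] = false ->
    decoding_error instance3 enc dec n [a'; b'; c'; d'] = false ->
    restrict J (sent instance3 enc n [a; b; c; d]) =
      restrict J (sent instance3 enc n [a'; b'; c'; d']) ->
    restrict I [a; b; c; d] = restrict I [a'; b'; c'; d'] ->
    [a; b; c; d] = [a'; b'; c'; d'].

Lemma cut3_not_achievable (r1 r2 r3 r4 : R) (J I D : list nat) :
  Forall (fun j => j < 2)%nat J -> Forall (fun i => i < 4)%nat I -> cut3 J I ->
  (forall n, fold_right Nat.mul 1%nat (msg_sizes n [r1; r2; r3; r4]) =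
     (fold_right Nat.mul 1 (restrict D (msg_sizes n [r1; r2; r3; r4]))
      * fold_right Nat.mul 1 (restrict I (msg_sizes n [r1; r2; r3; r4])))%nat) ->
  (exists N, forall n, (N <= n)%nat ->
     (2 * fold_right Nat.mul 1 (restrict J [2 ^ n; 2 ^ n])
        <= fold_right Nat.mul 1 (restrict D (msg_sizes n [r1; r2; r3; r4])))%nat) ->
  ~ achievable instance3 [r1; r2; r3; r4].
Proof.
  intros HJ HI Hcut Hsplit [N Hsize] [_ [_ [enc [dec [Hval Hcv]]]]].
  revert Hcv; apply not_Un_cv_0_of_ge_half; exists N; intros n Hn.
  apply error_prob_ge_half_of_cut with (caps := [2 ^ n; 2 ^ n]%nat) (J := J) (I := I);
    [intros m; now apply sent3_in_tuples | exact HJ | exact HI | |].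
  - intros m m' Hm Hm'.
    apply In_tuples_Forall2, Forall2_length in Hm, Hm'.
    destruct m as [|a [|b [|c [|d [|]]]]]; try discriminate;
    destruct m' as [|a' [|b' [|c' [|d' [|]]]]]; try discriminate.
    apply Hcut.
  - rewrite Hsplit; specialize (Hsize n Hn); nia.
Qed.

Ltac solve_cut3 :=
  red; intros * (? & ? & ? & ?)%decoding_error3_false (? & ? & ? & ?)%decoding_error3_false;
  cbn; intros HL HI; injection HL; injection HI; intros; subst; congruence.

Lemma cut3_R1 : cut3 [0]%nat [1; 2; 3]%nat.
Proof. solve_cut3. Qed.

Lemma cut3_R4 : cut3 [1]%nat [0; 1; 2]%nat.
Proof. solve_cut3. Qed.

Lemma cut3_R1R2 : cut3 [0; 1]%nat [2; 3]%nat.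
Proof. solve_cut3. Qed.

Lemma cut3_R1R3 : cut3 [0; 1]%nat [1; 3]%nat.
Proof. solve_cut3. Qed.

Lemma cut3_R2R4 : cut3 [0; 1]%nat [0; 2]%nat.
Proof. solve_cut3. Qed.

Lemma cut3_R3R4 : cut3 [0; 1]%nat [0; 1]%nat.
Proof. solve_cut3. Qed.

Definition msg_bits (n : nat) (r : R) : nat := Z.to_nat (ceilZ (INR n * r)).

Lemma msg_size_bits n r : msg_size n r = (2 ^ msg_bits n r)%nat.
Proof. reflexivity. Qed.

Lemma ceilZ_spec x : x <= IZR (ceilZ x) < x + 1.
Proof. unfold ceilZ; rewrite opp_IZR; destruct (base_Int_part (- x)); lra. Qed.

Lemma INR_Z_to_nat z : (0 <= z)%Z -> INR (Z.to_nat z) = IZR z.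
Proof. intro Hz; now rewrite INR_IZR_INZ, Z2Nat.id. Qed.

Lemma msg_bits_ge n r : INR n * r <= INR (msg_bits n r).
Proof.
  unfold msg_bits; destruct (ceilZ_spec (INR n * r)) as [Hge _].
  destruct (Z_le_gt_dec 0 (ceilZ (INR n * r))) as [Hz | Hz].
  - now rewrite INR_Z_to_nat.
  - apply Z.gt_lt, IZR_lt in Hz; pose proof (pos_INR (Z.to_nat (ceilZ (INR n * r)))); lra.
Qed.

Lemma msg_bits_lt n r : 0 <= r -> INR (msg_bits n r) < INR n * r + 1.
Proof.
  intro Hr; pose proof (pos_INR n); unfold msg_bits.
  destruct (ceilZ_spec (INR n * r)) as [Hge Hlt].
  rewrite INR_Z_to_nat; [exact Hlt|].
  apply le_IZR; nra.
Qed.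

Lemma eventually_gap (k s : R) :
  k < s -> exists N, forall n, (N <= n)%nat -> INR n * k + 1 <= INR n * s.
Proof.
  intro Hks; destruct (INR_unbounded (/ (s - k))) as [N HN].
  exists N; intros n Hn; apply le_INR in Hn.
  assert (Hn' : / (s - k) < INR n) by lra.
  apply Rmult_lt_compat_r with (r := s - k) in Hn'; [|lra].
  rewrite Rinv_l in Hn' by lra; nra.
Qed.

Lemma msg_size_eventually_ge1 r :
  1 < r -> exists N, forall n, (N <= n)%nat -> (2 * 2 ^ n <= msg_size n r)%nat.
Proof.
  intro Hr; destruct (eventually_gap 1 r Hr) as [N HN]; exists N; intros n Hn.
  rewrite msg_size_bits; apply (Nat.pow_le_mono_r 2 (S n)); [lia|].
  apply INR_le; rewrite S_INR; pose proof (msg_bits_ge n r); specialize (HN n Hn); lra.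
Qed.

Lemma msg_size_eventually_ge2 r r' :
  2 < r + r' -> exists N, forall n, (N <= n)%nat ->
    (2 * (2 ^ n * 2 ^ n) <= msg_size n r * msg_size n r')%nat.
Proof.
  intro Hr; destruct (eventually_gap 2 (r + r') Hr) as [N HN]; exists N; intros n Hn.
  rewrite !msg_size_bits, <- !Nat.pow_add_r, <- Nat.pow_succ_r'.
  apply Nat.pow_le_mono_r; [lia|].
  apply INR_le; rewrite S_INR, !plus_INR.
  pose proof (msg_bits_ge n r); pose proof (msg_bits_ge n r'); specialize (HN n Hn); lra.
Qed.

Lemma achievable3_bounds r1 r2 r3 r4 :
  achievable instance3 [r1; r2; r3; r4] ->
  r1 <= 1 /\ r4 <= 1 /\ r1 + r2 <= 2 /\ r1 + r3 <= 2 /\ r2 + r4 <= 2 /\ r3 + r4 <= 2.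
Proof.
  intro Hach; repeat split; apply Rnot_lt_le; intro Hgt; revert Hach.
  - apply (cut3_not_achievable _ _ _ _ [0] [1; 2; 3] [0])%nat;
      [repeat constructor | repeat constructor | exact cut3_R1 | intro; simpl; ring |].
    destruct (msg_size_eventually_ge1 _ Hgt) as [N HN]; exists N; intros n Hn.
    specialize (HN n Hn); simpl; lia.
  - apply (cut3_not_achievable _ _ _ _ [1] [0; 1; 2] [3])%nat;
      [repeat constructor | repeat constructor | exact cut3_R4 | intro; simpl; ring |].
    destruct (msg_size_eventually_ge1 _ Hgt) as [N HN]; exists N; intros n Hn.
    specialize (HN n Hn); simpl; lia.
  - apply (cut3_not_achievable _ _ _ _ [0; 1] [2; 3] [0; 1])%nat;
      [repeat constructor | repeat constructor | exact cut3_R1R2 | intro; simpl; ring |].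
    destruct (msg_size_eventually_ge2 _ _ Hgt) as [N HN]; exists N; intros n Hn.
    specialize (HN n Hn); simpl; lia.
  - apply (cut3_not_achievable _ _ _ _ [0; 1] [1; 3] [0; 2])%nat;
      [repeat constructor | repeat constructor | exact cut3_R1R3 | intro; simpl; ring |].
    destruct (msg_size_eventually_ge2 _ _ Hgt) as [N HN]; exists N; intros n Hn.
    specialize (HN n Hn); simpl; lia.
  - apply (cut3_not_achievable _ _ _ _ [0; 1] [0; 2] [1; 3])%nat;
      [repeat constructor | repeat constructor | exact cut3_R2R4 | intro; simpl; ring |].
    destruct (msg_size_eventually_ge2 _ _ Hgt) as [N HN]; exists N; intros n Hn.
    specialize (HN n Hn); simpl; lia.
  - apply (cut3_not_achievable _ _ _ _ [0; 1] [0; 1] [2; 3])%nat;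
      [repeat constructor | repeat constructor | exact cut3_R3R4 | intro; simpl; ring |].
    destruct (msg_size_eventually_ge2 _ _ Hgt) as [N HN]; exists N; intros n Hn.
    specialize (HN n Hn); simpl; lia.
Qed.

(** * The coding scheme *)

Local Open Scope nat_scope.

Definition subm (N x y : nat) : nat := (x + (N - y)) mod N.

Lemma subm_add_r N x y : x < N -> y < N -> subm N ((x + y) mod N) y = x.
Proof.
  intros Hx Hy; unfold subm; rewrite Nat.Div0.add_mod_idemp_l.
  replace (x + y + (N - y)) with (x + 1 * N) by lia.
  now rewrite Nat.Div0.mod_add, Nat.mod_small.
Qed.

Lemma subm_add_l N x y : x < N -> y < N -> subm N ((x + y) mod N) x = y.
Proof. intros; rewrite Nat.add_comm; now apply subm_add_r. Qed.

Lemma digits_add_mul e u v : u < e -> (u + e * v) mod e = u /\ (u + e * v) / e = v.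
Proof.
  intro Hu; rewrite (Nat.mul_comm e v); split.
  - now rewrite Nat.Div0.mod_add, Nat.mod_small.
  - now rewrite Nat.div_add, Nat.div_small by lia.
Qed.

Section Scheme.

Variables e g : nat.

Definition mixed (b c : nat) : nat := (b + c) mod (e * (g * g)).

Definition encode1 (a b c : nat) : nat :=
  let w := mixed b c in (a + w mod e) mod e + e * (w / e mod g).

Definition encode2 (b c d : nat) : nat :=
  let w := mixed b c in (d + w mod e) mod e + e * (w / e / g).

Definition rebuild (a L1 L2 : nat) : nat :=
  subm e (L1 mod e) a + e * (L1 / e + g * (L2 / e)).

Definition decode (j : nat) (L s : list nat) : nat :=
  let L1 := nth 0 L 0 in
  let L2 := nth 1 L 0 in
  match j with
  | 0 => subm e (L1 mod e) (subm e (L2 mod e) (nth 0 s 0))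
  | 1 | 2 => subm (e * (g * g)) (rebuild (nth 0 s 0) L1 L2) (nth 1 s 0)
  | _ => subm e (L2 mod e) (mixed (nth 0 s 0) (nth 1 s 0) mod e)
  end.

Hypotheses (e_pos : 0 < e) (g_pos : 0 < g).

Lemma mixed_lt b c : mixed b c < e * (g * g).
Proof. apply Nat.mod_upper_bound; nia. Qed.

Lemma encode1_lt a b c : encode1 a b c < e * g.
Proof.
  unfold encode1.
  pose proof (Nat.mod_upper_bound (a + mixed b c mod e) e ltac:(lia)).
  pose proof (Nat.mod_upper_bound (mixed b c / e) g ltac:(lia)); nia.
Qed.

Lemma encode2_lt b c d : encode2 b c d < e * g.
Proof.
  unfold encode2.
  pose proof (Nat.mod_upper_bound (d + mixed b c mod e) e ltac:(lia)).
  assert (mixed b c / e / g < g)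
    by (rewrite Nat.Div0.div_div; apply Nat.Div0.div_lt_upper_bound; pose proof (mixed_lt b c); nia).
  nia.
Qed.

Lemma encode1_digits a b c :
  encode1 a b c mod e = (a + mixed b c mod e) mod e /\
  encode1 a b c / e = mixed b c / e mod g.
Proof. apply digits_add_mul, Nat.mod_upper_bound; lia. Qed.

Lemma encode2_digits b c d :
  encode2 b c d mod e = (d + mixed b c mod e) mod e /\
  encode2 b c d / e = mixed b c / e / g.
Proof. apply digits_add_mul, Nat.mod_upper_bound; lia. Qed.

Lemma rebuild_correct a b c d :
  a < e -> rebuild a (encode1 a b c) (encode2 b c d) = mixed b c.
Proof.
  intro Ha; unfold rebuild.
  destruct (encode1_digits a b c) as [-> ->]; destruct (encode2_digits b c d) as [_ ->].
  rewrite subm_add_l by (try apply Nat.mod_upper_bound; lia).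
  pose proof (Nat.div_mod_eq (mixed b c / e) g).
  pose proof (Nat.div_mod_eq (mixed b c) e); lia.
Qed.

Lemma decode_correct a b c d :
  a < e -> d < e -> b < e * (g * g) -> c < e * (g * g) ->
  let L := [encode1 a b c; encode2 b c d] in
  decode 0 L [d] = a /\ decode 1 L [a; c] = b /\
  decode 2 L [a; b] = c /\ decode 3 L [b; c] = d.
Proof.
  intros Ha Hd Hb Hc; cbn [decode nth].
  rewrite !rebuild_correct by assumption.
  destruct (encode1_digits a b c) as [-> _]; destruct (encode2_digits b c d) as [-> _].
  assert (Hw : mixed b c mod e < e) by (apply Nat.mod_upper_bound; lia).
  rewrite !subm_add_l, subm_add_r by assumption.
  unfold mixed; rewrite subm_add_r, subm_add_l by assumption; repeat split.
  now rewrite subm_add_r.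
Qed.

End Scheme.

Definition scheme_enc (T : nat -> nat) : Encoders := fun n k x =>
  let e := 2 ^ T n in
  let g := 2 ^ (n - T n) in
  match k with
  | 0 => encode1 e g (nth 0 x 0) (nth 1 x 0) (nth 2 x 0)
  | _ => encode2 e g (nth 0 x 0) (nth 1 x 0) (nth 2 x 0)
  end.

Definition scheme_dec (T : nat -> nat) : Decoders := fun n j L s =>
  decode (2 ^ T n) (2 ^ (n - T n)) j L s.

Lemma scheme_enc_valid (T : nat -> nat) Rs n :
  T n <= n -> encoders_valid instance3 Rs (scheme_enc T) n.
Proof.
  intros HT k m Hk _.
  replace (nth k (ic_C instance3) 0%R) with 1%R
    by (destruct k as [|[|k]]; cbn in Hk |- *; auto; lia).
  rewrite link_size_1.
  replace (2 ^ n) with (2 ^ T n * 2 ^ (n - T n)) by (rewrite <- Nat.pow_add_r; f_equal; lia).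
  assert (0 < 2 ^ T n) by (apply Nat.neq_0_lt_0, Nat.pow_nonzero; lia).
  assert (0 < 2 ^ (n - T n)) by (apply Nat.neq_0_lt_0, Nat.pow_nonzero; lia).
  destruct k; [apply encode1_lt | apply encode2_lt]; assumption.
Qed.

Lemma scheme_no_error (T : nat -> nat) n a b c d :
  T n <= n -> a < 2 ^ T n -> d < 2 ^ T n ->
  b < 2 ^ (2 * n - T n) -> c < 2 ^ (2 * n - T n) ->
  decoding_error instance3 (scheme_enc T) (scheme_dec T) n [a; b; c; d] = false.
Proof.
  intros HT Ha Hd Hb Hc.
  set (e := 2 ^ T n); set (g := 2 ^ (n - T n)).
  assert (Hegg : 2 ^ (2 * n - T n) = e * (g * g))
    by (unfold e, g; rewrite <- !Nat.pow_add_r; f_equal; lia).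
  rewrite Hegg in Hb, Hc.
  assert (He : 0 < e) by (apply Nat.neq_0_lt_0, Nat.pow_nonzero; lia).
  assert (Hg : 0 < g) by (apply Nat.neq_0_lt_0, Nat.pow_nonzero; lia).
  destruct (decode_correct e g He Hg a b c d Ha Hd Hb Hc) as (D0 & D1 & D2 & D3).
  unfold decoding_error; cbn -[encode1 encode2 decode].
  unfold scheme_dec; fold e g; cbn [nth]; rewrite D0, D1, D2, D3, !Nat.eqb_refl.
  reflexivity.
Qed.

Local Open Scope R_scope.

Lemma error_prob_eq_0 P Rs enc dec n :
  (forall m, In m (tuples (msg_sizes n Rs)) -> decoding_error P enc dec n m = false) ->
  error_prob P Rs enc dec n = 0.
Proof.
  intro H; unfold error_prob.
  rewrite (filter_ext_in _ (fun _ => false) _ H), filter_false; simpl; lra.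
Qed.

Lemma Un_cv_0_of_eventually_0 (u : nat -> R) :
  (exists N, forall n, (N <= n)%nat -> u n = 0) -> Un_cv u 0.
Proof.
  intros [N H] eps Heps; exists N; intros n Hn.
  unfold R_dist; rewrite H, Rminus_0_r, Rabs_R0 by exact Hn; exact Heps.
Qed.

Lemma achievable3_of_margin a b c d δ :
  0 < δ -> 0 <= a -> 0 <= b -> 0 <= c -> 0 <= d ->
  a <= 1 - δ -> d <= 1 - δ -> a + b <= 2 - 2 * δ -> a + c <= 2 - 2 * δ ->
  b + d <= 2 - 2 * δ -> c + d <= 2 - 2 * δ ->
  achievable instance3 [a; b; c; d].
Proof.
  intros Hδ Ha Hb Hc Hd Had Hdd Hab Hac Hbd Hcd.
  (* Capping by [n] keeps the link indices within [n] bits also for small [n],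
     where the scheme need not decode. *)
  set (T n := Nat.min n (Nat.max (msg_bits n a) (msg_bits n d))).
  split; [reflexivity|]; split.
  { intros r Hr; simpl in Hr; intuition (subst; assumption). }
  exists (scheme_enc T), (scheme_dec T); split.
  { intro n; apply scheme_enc_valid; unfold T; lia. }
  apply Un_cv_0_of_eventually_0.
  destruct (eventually_gap 0 δ Hδ) as [N HN]; exists N; intros n Hn.
  specialize (HN n Hn); rewrite Rmult_0_r, Rplus_0_l in HN.
  pose proof (pos_INR n) as Hn0.
  pose proof (msg_bits_lt n a Ha) as Ka; pose proof (msg_bits_lt n b Hb) as Kb.
  pose proof (msg_bits_lt n c Hc) as Kc; pose proof (msg_bits_lt n d Hd) as Kd.
  assert (Ba : (msg_bits n a < n)%nat) by (apply INR_lt; nra).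
  assert (Bd : (msg_bits n d < n)%nat) by (apply INR_lt; nra).
  assert (Bab : (msg_bits n a + msg_bits n b < 2 * n)%nat)
    by (apply INR_lt; rewrite plus_INR, mult_INR; simpl; nra).
  assert (Bbd : (msg_bits n d + msg_bits n b < 2 * n)%nat)
    by (apply INR_lt; rewrite plus_INR, mult_INR; simpl; nra).
  assert (Bac : (msg_bits n a + msg_bits n c < 2 * n)%nat)
    by (apply INR_lt; rewrite plus_INR, mult_INR; simpl; nra).
  assert (Bcd : (msg_bits n d + msg_bits n c < 2 * n)%nat)
    by (apply INR_lt; rewrite plus_INR, mult_INR; simpl; nra).
  apply error_prob_eq_0; intros m Hm; apply In_tuples_Forall2 in Hm.
  inversion Hm as [|x1 ? ? ? M1 Hm1]; inversion Hm1 as [|x2 ? ? ? M2 Hm2];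
  inversion Hm2 as [|x3 ? ? ? M3 Hm3]; inversion Hm3 as [|x4 ? ? ? M4 Hm4];
  inversion Hm4; subst.
  rewrite msg_size_bits in M1, M2, M3, M4.
  apply scheme_no_error; unfold T; try lia;
    eapply Nat.lt_le_trans; try eassumption; apply Nat.pow_le_mono_r; lia.
Qed.

Definition region3 (r1 r2 r3 r4 : R) : Prop :=
  0 <= r1 /\ 0 <= r2 /\ 0 <= r3 /\ 0 <= r4 /\
  r1 <= 1 /\ r4 <= 1 /\ r1 + r2 <= 2 /\ r1 + r3 <= 2 /\ r2 + r4 <= 2 /\ r3 + r4 <= 2.

Lemma region3_of_achievable r1 r2 r3 r4 :
  achievable instance3 [r1; r2; r3; r4] -> region3 r1 r2 r3 r4.
Proof.
  intro Hach; pose proof (achievable3_bounds _ _ _ _ Hach) as Hb.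
  destruct Hach as [_ [Hnn _]].
  repeat split; try apply Hnn; simpl; tauto.
Qed.

Lemma region3_closed R1 R2 R3 R4 :
  (forall eps, 0 < eps -> exists r1 r2 r3 r4, region3 r1 r2 r3 r4 /\
     Rabs (R1 - r1) < eps /\ Rabs (R2 - r2) < eps /\
     Rabs (R3 - r3) < eps /\ Rabs (R4 - r4) < eps) ->
  region3 R1 R2 R3 R4.
Proof.
  intro Happrox; repeat split; apply Rle_plus_epsilon; intros eps Heps;
    destruct (Happrox (eps / 2) ltac:(lra)) as (r1 & r2 & r3 & r4 & Hr & A1 & A2 & A3 & A4);
    unfold region3 in Hr;
    apply Rabs_def2 in A1, A2, A3, A4; lra.
Qed.

Lemma region3_of_in_capacity_region R1 R2 R3 R4 :
  in_capacity_region instance3 [R1; R2; R3; R4] -> region3 R1 R2 R3 R4.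
Proof.
  intros [_ Happrox]; apply region3_closed; intros eps Heps.
  destruct (Happrox eps Heps) as [Rs [Hach Hclose]].
  pose proof Hach as [Hlen _].
  destruct Rs as [|r1 [|r2 [|r3 [|r4 [|]]]]]; try discriminate Hlen.
  exists r1, r2, r3, r4; split; [now apply region3_of_achievable|].
  repeat split;
    [apply (Hclose 0%nat) | apply (Hclose 1%nat) | apply (Hclose 2%nat) | apply (Hclose 3%nat)];
    simpl; lia.
Qed.

(* Shrinking the rates by the factor [1 - δ] creates the margin needed by the scheme. *)
Lemma in_capacity_region_of_region3 R1 R2 R3 R4 :
  region3 R1 R2 R3 R4 -> in_capacity_region instance3 [R1; R2; R3; R4].
Proof.
  intros (P1 & P2 & P3 & P4 & H1 & H4 & H12 & H13 & H24 & H34).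
  split; [reflexivity|]; intros eps Heps.
  set (δ := Rmin (1/2) (eps / 4)).
  assert (0 < δ) by (apply Rmin_glb_lt; lra).
  assert (δ <= 1/2) by apply Rmin_l.
  assert (δ <= eps / 4) by apply Rmin_r.
  exists [(1 - δ) * R1; (1 - δ) * R2; (1 - δ) * R3; (1 - δ) * R4]; split.
  - apply achievable3_of_margin with δ; nra.
  - assert (Hclose : forall r, 0 <= r <= 2 -> Rabs (r - (1 - δ) * r) < eps)
      by (intros r Hr; apply Rabs_def1; nra).
    intros [|[|[|[|j]]]] Hj; simpl in Hj |- *; try lia; apply Hclose; lra.
Qed.

Theorem mainTheorem3 (R1 R2 R3 R4 : R) :
  in_capacity_region instance3 [R1; R2; R3; R4] <->
  (0 <= R1 /\ 0 <= R2 /\ 0 <= R3 /\ 0 <= R4 /\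
   R1 <= 1 /\ R4 <= 1 /\ R1 + R2 <= 2 /\ R1 + R3 <= 2 /\
   R2 + R4 <= 2 /\ R3 + R4 <= 2).
Proof.
  split; [apply region3_of_in_capacity_region | apply in_capacity_region_of_region3].
Qed.
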